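(* Let $P$ and $Q$ be stochastic matrices over a countable set $\Omega$. (1) If $\rho$ is a *-automorphism of $\ell^\infty(\Omega)$ and there exists a $\rho$-similarity from $Arv(P)$ to $Arv(Q)$, then for all $i,j$: $P_{ij}>0\iff Q_{\sigma_\rho(i)\sigma_\rho(j)}>0$. (2) If $\Omega$ is finite, $P$ and $Q$ are essential, and $\sigma$ is a permutation of $\Omega$ with $P_{ij}>0\iff Q_{\sigma(i)\sigma(j)}>0$ for all $i,j$, then there exists a $\rho_\sigma$-similarity from $Arv(P)$ to $Arv(Q)$.
   Context: A stochastic matrix has nonnegative entries and row sums $1$; $P^{(n)}_{ij}$ is the $(i,j)$ entry of $P^n$. $P$ is essential if no state $i$ has some $j$ and $n\ge1$ with $P^{(n)}_{ij}>0$ but $P^{(m)}_{ji}=0$ for all $m\ge1$. For a permutation $\sigma$, $\rho_\sigma(f)=f\circ\sigma^{-1}$; for a *-automorphism $\rho$ of $\ell^\infty(\Omega)$, $\sigma_\rho$ is the permutation with $\rho(p_j)=p_{\sigma_\rho(j)}$, $p_j$ the indicator of $\{j\}$. $Arv(P)$: $Arv(P)_0=\ell^\infty(\Omega)$; $Arv(P)_n$ ($n\ge1$) is the set of complex $\Omega\times\Omega$ matrices $A=[a_{ij}]$ with $a_{ij}=0$ whenever $P^{(n)}_{ij}=0$ and $\sup_j\sum_i|a_{ij}|^2<\infty$, a W*-correspondence over $\ell^\infty(\Omega)$ with actions by diagonal matrices and inner product $\mathrm{Diag}(A^*B)$; $U^P_{n,m}(A\otimes B)=(\sqrt{P^{n+m}})^{\flat}*[(\sqrt{P^n}*A)(\sqrt{P^m}*B)]$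 for $n,m\ge1$ ($*$ entrywise product, $\sqrt\cdot$ entrywise, $M^\flat_{ik}=M_{ik}^{-1}$ if $M_{ik}>0$, else $0$), $U_{0,n},U_{n,0}$ module actions. A $\rho$-similarity $V:Arv(P)\to Arv(Q)$ is a family $(V_n)_{n\ge0}$ with $V_0=\rho$, each $V_n:Arv(P)_n\to Arv(Q)_n$ ($n\ge1$) a bijective bounded linear map with $V_n(a\xi b)=\rho(a)V_n(\xi)\rho(b)$, $\sup_n\max(\|V_n\|,\|V_n^{-1}\|)<\infty$, and $V_{n+m}U^P_{n,m}=U^Q_{n,m}(V_n\otimes V_m)$ for all $n,m$. *)

From mathcomp Require Import all_boot all_order all_algebra.
From mathcomp Require Import all_classical all_reals all_analysis.
From mathcomp.real_closed Require Import complex.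
Import Order.TTheory GRing.Theory Num.Theory numFieldNormedType.Exports.

Set Implicit Arguments.
Unset Strict Implicit.
Unset Printing Implicit Defensive.

Local Open Scope ring_scope.
Local Open Scope complex_scope.
Local Open Scope classical_set_scope.
Local Open Scope ring_scope.

Section ArvDefs.
Variables (R : realType) (Omega : countType).

Definition rmat := Omega -> Omega -> R.
Definition cmat := Omega -> Omega -> R[i].

(* enumeration of Omega by naturals (each element exactly once) *)
Definition enumf (V : zmodType) (f : Omega -> V) (n : nat) : V :=
  match (pickle_inv n : option Omega) with Some x => f x | None => 0 end.

(* sum over the countable set Omega: limit of partial sums along the
   enumeration (used only for nonnegative or absolutely summable families) *)
Definition rsum (f : Omega -> R) : R := limn (series (enumf f)).
Definition csum (f : Omega -> R[i]) : R[i] :=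
  (rsum (fun x => complex.Re (f x))) +i* (rsum (fun x => complex.Im (f x))).

Definition abs2 (z : R[i]) : R := complex.Re z ^+ 2 + complex.Im z ^+ 2.

Definition stochastic (P : rmat) : Prop :=
  (forall i j, 0 <= P i j) /\
  (forall i, series (enumf (P i)) @ \oo --> (1 : R)).

Fixpoint mpow (P : rmat) (n : nat) : rmat :=
  match n with
  | 0%N => fun i k => if i == k then 1 else 0
  | n'.+1 => fun i k => rsum (fun j => mpow P n' i j * P j k)
  end.

Definition essential (P : rmat) : Prop :=
  ~ (exists i j (n : nat), (0 < n)%N /\ 0 < mpow P n i j /\
        forall m : nat, (0 < m)%N -> mpow P m j i = 0).

Definition linfty (f : Omega -> R[i]) : Prop :=
  exists M : R, forall x, abs2 (f x) <= M.

Definition ptind (j : Omega) : Omega -> R[i] := fun x => if x == j then 1 else 0.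

Definition star_aut (rho : (Omega -> R[i]) -> (Omega -> R[i])) : Prop :=
  (forall f, linfty f -> linfty (rho f)) /\
      (forall f g (c : R[i]), linfty f -> linfty g ->
          rho (fun x => f x + c * g x) = (fun x => rho f x + c * rho g x)) /\
      (forall f g, linfty f -> linfty g ->
          rho (fun x => f x * g x) = (fun x => rho f x * rho g x)) /\
      (forall f, linfty f -> rho (fun x => (f x)^*) = (fun x => (rho f x)^*)) /\
      (forall f g, linfty f -> linfty g -> rho f = rho g -> f = g) /\
      (forall g, linfty g -> exists f, linfty f /\ rho f = g).

Definition colsq (A : cmat) (M : R) : Prop :=
  forall (j : Omega) (s : seq Omega), uniq s -> \sum_(i <- s) abs2 (A i j) <= M.

(* ||A|| <= c in the W*-correspondence norm ||Diag(A^* A)||^(1/2) *)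
Definition norm_le (A : cmat) (c : R) : Prop := colsq A (c ^+ 2).

Definition Arv (P : rmat) (n : nat) (A : cmat) : Prop :=
  (forall i j, mpow P n i j = 0 -> A i j = 0) /\ exists M, colsq A M.

Definition Umul (P : rmat) (n m : nat) (A B : cmat) : cmat :=
  fun i k =>
    let p := mpow P (n + m) i k in
    if 0 < p then
      csum (fun j => (Num.sqrt (mpow P n i j))%:C * A i j *
                     ((Num.sqrt (mpow P m j k))%:C * B j k))
        / (Num.sqrt p)%:C
    else 0.

(* V = (V_n)_{n>=0} with V_0 = rho is a rho-similarity Arv(P) -> Arv(Q);
   V n is only relevant on Arv(P)_n for n >= 1 *)
Definition similarity (P Q : rmat) (rho : (Omega -> R[i]) -> (Omega -> R[i]))
    (V : nat -> cmat -> cmat) : Prop :=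
      (forall n, (0 < n)%N -> forall A, Arv P n A -> Arv Q n (V n A)) /\
      (forall n, (0 < n)%N -> forall A B, Arv P n A -> Arv P n B ->
          V n A = V n B -> A = B) /\
      (forall n, (0 < n)%N -> forall B, Arv Q n B ->
          exists A, Arv P n A /\ V n A = B) /\
      (forall n, (0 < n)%N -> forall A B (c : R[i]), Arv P n A -> Arv P n B ->
          V n (fun i j => A i j + c * B i j) = (fun i j => V n A i j + c * V n B i j)) /\
      (forall n, (0 < n)%N -> forall a b xi, linfty a -> linfty b -> Arv P n xi ->
          V n (fun i j => a i * xi i j * b j) = (fun i j => rho a i * V n xi i j * rho b j)) /\
      (* sup_n max(||V_n||, ||V_n^-1||) < oo *)
      (exists C : R, 0 <= C /\
         forall n, (0 < n)%N -> forall A, Arv P n A -> forall c : R, 0 <= c ->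
           (norm_le A c -> norm_le (V n A) (C * c)) /\
           (norm_le (V n A) c -> norm_le A (C * c))) /\
      (* V_{n+m} U^P_{n,m} = U^Q_{n,m} (V_n (x) V_m) on elementary tensors *)
      (forall n m, (0 < n)%N -> (0 < m)%N -> forall A B, Arv P n A -> Arv P m B ->
          V (n + m)%N (Umul P n m A B) = Umul Q n m (V n A) (V m B)).

End ArvDefs.

From mathcomp Require Import all_boot all_order all_algebra.
From mathcomp Require Import all_classical all_reals all_analysis.
From mathcomp.real_closed Require Import complex.
From mathcomp Require Import zify ring.
Import Order.TTheory GRing.Theory Num.Theory numFieldNormedType.Exports.
Set Implicit Arguments.
Unset Strict Implicit.
Unset Printing Implicit Defensive.

Local Open Scope ring_scope.
Local Open Scope complex_scope.
Local Open Scope classical_set_scope.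

(* (1) In degree one a similarity is a bimodule isomorphism V_1 : Arv(P)_1 -> Arv(Q)_1
   over rho, so it maps the corner p_i Arv(P)_1 p_j, which is nonzero iff P_ij > 0,
   bijectively onto the corner p_(sigma i) Arv(Q)_1 p_(sigma j).
   (2) If sigma matches the supports of P and Q, it matches the supports of all powers,
   and V_n(A)_(sigma i, sigma k) = A_ik * sqrt(P^n_ik / Q^n_(sigma i, sigma k)) turns
   U^P into U^Q because the weights sqrt(P^n) in U cancel against these factors. V_n is
   uniformly bounded with bounded inverse because, for a finite essential P, the positive
   entries of the powers P^n (n >= 1) are bounded below by some d > 0: the supports of
   P^n are eventually periodic, and essentiality lets every positive entry of a high
   power P^(m + a) be routed through a positive entry of the fixed power P^a. *)

Section FinitelySupportedSums.
Variables (R : realType) (Omega : countType).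

Lemma enumf_finsupp (f : Omega -> R) (e : seq Omega) k : uniq e ->
    (forall x, x \notin e -> f x = 0) ->
  enumf f k = \sum_(x <- e) (if pickle x == k then f x else 0).
Proof.
move=> ue f0; rewrite /enumf; case hk: (pickle_inv k) => [y|]; last first.
  by rewrite big1 // => x _; case: eqP => // px; move: hk; rewrite -px pickleK_inv.
have pickle_eq x : (pickle x == k) = (x == y).
  have py : pickle y = k by have := pickle_invK (T := Omega) k; rewrite hk.
  by rewrite -py (inj_eq (pcan_inj (@pickleK_inv Omega))).
under eq_bigr do rewrite pickle_eq.
have [ye|ye] := boolP (y \in e).
  by rewrite (bigD1_seq y) //= eqxx big1 ?addr0 // => x /negbTE ->.
rewrite f0 // big1_seq // => x /= xe; case: eqP => // xy.
by move: ye; rewrite -xy xe.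
Qed.

Lemma series_enumf_finsupp (f : Omega -> R) (e : seq Omega) n : uniq e ->
    (forall x, x \notin e -> f x = 0) -> (\max_(x <- e) (pickle x).+1 <= n)%N ->
  series (enumf f) n = \sum_(x <- e) f x.
Proof.
move=> ue f0 hn; rewrite /series /=.
under eq_bigr do rewrite (enumf_finsupp _ ue f0).
rewrite exchange_big /= big_seq [RHS]big_seq; apply: eq_bigr => x xe.
rewrite big_mkcond /=; under eq_bigr do rewrite eq_sym.
rewrite -big_mkcond big_nat1_eq /=.
by rewrite (leq_trans _ hn) // (leq_bigmax_seq (F := fun x => (pickle x).+1)).
Qed.

Lemma rsum_finsupp (f : Omega -> R) (e : seq Omega) : uniq e ->
  (forall x, x \notin e -> f x = 0) -> rsum f = \sum_(x <- e) f x.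
Proof.
move=> ue f0; apply: norm_lim_near_cst.
by exists (\max_(x <- e) (pickle x).+1) => // n /= /(series_enumf_finsupp ue f0).
Qed.

Lemma cvg_series_enumf_finsupp (f : Omega -> R) (e : seq Omega) l : uniq e ->
    (forall x, x \notin e -> f x = 0) -> series (enumf f) @ \oo --> l ->
  \sum_(x <- e) f x = l.
Proof.
move=> ue f0 fl; have fe : series (enumf f) @ \oo --> \sum_(x <- e) f x.
  apply: cvg_near_cst.
  by exists (\max_(x <- e) (pickle x).+1) => // n /= /(series_enumf_finsupp ue f0).
exact: (cvg_unique _ fe fl).
Qed.

Lemma mpow1 (P : rmat R Omega) i k : mpow P 1 i k = P i k.
Proof.
rewrite /= (@rsum_finsupp _ [:: i]) // ?big_seq1 ?eqxx ?mul1r // => x.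
by rewrite inE eq_sym => /negbTE ->; rewrite mul0r.
Qed.

End FinitelySupportedSums.

Lemma abs2_ge0 (R : realType) (z : R[i]) : 0 <= abs2 z.
Proof. by rewrite /abs2 addr_ge0 // sqr_ge0. Qed.

Lemma abs2Mr (R : realType) (z : R[i]) (t : R) : abs2 (z * t%:C) = abs2 z * t ^+ 2.
Proof. by case: z => a b; rewrite /abs2 /=; ring. Qed.

Lemma abs2_0 (R : realType) : abs2 (0 : R[i]) = 0.
Proof. by rewrite /abs2 /= expr0n /= addr0. Qed.

Lemma abs2_1 (R : realType) : abs2 (1 : R[i]) = 1.
Proof. by rewrite /abs2 /= expr0n /= addr0 expr1n. Qed.

Section Corners.
Variables (R : realType) (Omega : countType).

Definition matrix_unit (i j : Omega) : cmat R Omega :=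
  fun x y => if (x == i) && (y == j) then 1 else 0.

Definition corner (i j : Omega) (A : cmat R Omega) : cmat R Omega :=
  fun x y => ptind R i x * A x y * ptind R j y.

Lemma linfty_ptind (j : Omega) : linfty (ptind R j).
Proof. by exists 1 => x; rewrite /ptind; case: eqP; rewrite ?abs2_1 ?abs2_0. Qed.

Lemma corner_matrix_unit i j : corner i j (matrix_unit i j) = matrix_unit i j.
Proof.
apply/funext => x; apply/funext => y; rewrite /corner /ptind /matrix_unit.
by case: (x == i); case: (y == j); rewrite ?mul1r ?mulr1 ?mul0r ?mulr0.
Qed.

Lemma corner_eq0 i j A : A i j = 0 -> corner i j A = (fun _ _ => 0).
Proof.
move=> Aij0; apply/funext => x; apply/funext => y; rewrite /corner /ptind.
by case: eqP => [->|]; case: eqP => [->|]; rewrite ?Aij0 ?mulr0 ?mul0r.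
Qed.

Lemma matrix_unit_neq0 i j : matrix_unit i j <> (fun _ _ => 0).
Proof.
by move=> /(congr1 (fun A => A i j)) /eqP; rewrite /matrix_unit !eqxx oner_eq0.
Qed.

Lemma colsq_matrix_unit i j : colsq (matrix_unit i j) 1.
Proof.
move=> y s us; rewrite /matrix_unit.
case: (y =P j) => _; last by rewrite big1 // => x _; rewrite andbF abs2_0.
under eq_bigr do rewrite andbT (fun_if (@abs2 R)) abs2_0 abs2_1.
rewrite -big_mkcond big_const_seq /= -/(count_mem i s) count_uniq_mem //.
by case: (i \in s); rewrite /= ?addr0.
Qed.

Lemma Arv1_matrix_unit (P : rmat R Omega) i j :
  P i j != 0 -> Arv P 1 (matrix_unit i j).
Proof.
move=> Pij; split; last by exists 1; apply: colsq_matrix_unit.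
move=> x y; rewrite mpow1 /matrix_unit.
by case: andP => // -[/eqP -> /eqP ->] Pij0; move: Pij; rewrite Pij0 eqxx.
Qed.

Lemma Arv_corner (P : rmat R Omega) n i j A : Arv P n A -> Arv P n (corner i j A).
Proof.
move=> [A0 [M AM]]; split=> [x y /A0 Axy|]; first by rewrite /corner Axy mulr0 mul0r.
exists M => y s us; apply: le_trans (AM y s us); apply: ler_sum => x _.
rewrite /corner /ptind.
by case: (x == i); case: (y == j); rewrite ?mul1r ?mulr1 ?mul0r ?mulr0 ?abs2_0 ?abs2_ge0.
Qed.

End Corners.

Section SimilarityMatchesSupports.
Variables (R : realType) (Omega : countType) (P Q : rmat R Omega).
Variables (rho : (Omega -> R[i]) -> (Omega -> R[i])) (sigma : Omega -> Omega).
Variable V : nat -> cmat R Omega -> cmat R Omega.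
Hypothesis rho_ptind : forall j, rho (ptind R j) = ptind R (sigma j).
Hypothesis V_Arv : forall A, Arv P 1 A -> Arv Q 1 (V 1 A).
Hypothesis V_inj : forall A B, Arv P 1 A -> Arv P 1 B -> V 1 A = V 1 B -> A = B.
Hypothesis V_surj : forall B, Arv Q 1 B -> exists A, Arv P 1 A /\ V 1 A = B.
Hypothesis V_linear : forall A B (c : R[i]), Arv P 1 A -> Arv P 1 B ->
  V 1 (fun i j => A i j + c * B i j) = (fun i j => V 1 A i j + c * V 1 B i j).
Hypothesis V_bimodule : forall a b A, linfty a -> linfty b -> Arv P 1 A ->
  V 1 (fun i j => a i * A i j * b j) = (fun i j => rho a i * V 1 A i j * rho b j).

Let Arv0 : Arv P 1 (fun _ _ => 0).
Proof. by split=> //; exists 0 => y s _; rewrite big1 // => x _; rewrite abs2_0. Qed.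

Lemma similarity1_zero : V 1 (fun _ _ => 0) = (fun _ _ => 0).
Proof.
have := V_linear 1 Arv0 Arv0.
have -> : (fun _ _ => 0 + 1 * 0) = (fun _ _ : Omega => 0 : R[i]).
  by apply/funext => x; apply/funext => y; rewrite mulr0 addr0.
move=> V0; apply/funext => x; apply/funext => y.
move: V0 => /(congr1 (fun A => A x y)) /esym /eqP.
by rewrite /= mul1r -subr_eq0 addrK => /eqP.
Qed.

Lemma similarity1_corner i j A :
  Arv P 1 A -> V 1 (corner i j A) = corner (sigma i) (sigma j) (V 1 A).
Proof. by move=> AP; rewrite /corner V_bimodule ?rho_ptind //; apply: linfty_ptind. Qed.

Lemma similarity1_support i j : P i j != 0 -> Q (sigma i) (sigma j) != 0.
Proof.
move=> Pij; apply/eqP => Q0.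
have EP := Arv1_matrix_unit Pij.
have VE0 : V 1 (matrix_unit R i j) = (fun _ _ => 0).
  rewrite -corner_matrix_unit similarity1_corner // corner_eq0 //.
  by apply: (V_Arv EP).1; rewrite mpow1.
by apply: (@matrix_unit_neq0 R Omega i j); apply: V_inj => //; rewrite VE0 similarity1_zero.
Qed.

Lemma similarity1_support_inv i j : Q (sigma i) (sigma j) != 0 -> P i j != 0.
Proof.
move=> Qij; apply/eqP => P0.
have [A [AP VA]] := V_surj (Arv1_matrix_unit Qij).
have A_corner : corner i j A = A.
  apply: V_inj => //; first exact: Arv_corner.
  by rewrite similarity1_corner // VA corner_matrix_unit.
have A0 : A = (fun _ _ => 0).
  by rewrite -A_corner corner_eq0 //; apply: AP.1; rewrite mpow1.
by apply: (@matrix_unit_neq0 R Omega (sigma i) (sigma j)); rewrite -VA A0 similarity1_zero.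
Qed.

End SimilarityMatchesSupports.

Lemma similarity_matches_supports (R : realType) (Omega : countType) (P Q : rmat R Omega)
    rho (sigma : Omega -> Omega) V :
  stochastic P -> stochastic Q -> (forall j, rho (ptind R j) = ptind R (sigma j)) ->
  similarity P Q rho V -> forall i j, 0 < P i j <-> 0 < Q (sigma i) (sigma j).
Proof.
move=> [P_ge0 _] [Q_ge0 _] rho_ptind [V_Arv [V_inj [V_surj [V_lin [V_bim _]]]]] i j.
rewrite !lt0r P_ge0 Q_ge0 !andbT; split.
  exact: (similarity1_support rho_ptind (V_Arv 1%N isT) (V_inj 1%N isT)
    (V_lin 1%N isT) (V_bim 1%N isT)).
exact: (similarity1_support_inv rho_ptind (V_inj 1%N isT) (V_surj 1%N isT)
  (V_lin 1%N isT) (V_bim 1%N isT)).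
Qed.

Section EventuallyPeriodicRelations.
Variables (Omega : choiceType) (e : seq Omega).
Hypothesis e_full : forall x, x \in e.
Variable S : nat -> rel Omega.
Hypothesis S_add : forall n m i k, S (n + m) i k = has (fun j => S n i j && S m j k) e.

Lemma rel_power_succ n n' : S n =2 S n' -> S n.+1 =2 S n'.+1.
Proof.
move=> eqS i k; rewrite -[n.+1]addn1 -[n'.+1]addn1 !S_add.
by apply: eq_has => j; rewrite eqS.
Qed.

Lemma rel_power_repeat : exists a b, (a < b)%N /\ S a =2 S b.
Proof.
pose code n := [ffun p : seq_sub e * seq_sub e => S n (ssval p.1) (ssval p.2)].
have code_eq a b : code a = code b -> S a =2 S b.
  move=> /ffunP eq_ab i k.
  by have := eq_ab (SeqSub (e_full i), SeqSub (e_full k)); rewrite !ffunE.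
pose T := {ffun seq_sub e * seq_sub e -> bool}.
have : ~~ uniq (map code (iota 0 #|T|.+1)).
  apply/negP => uc; have := uniq_leq_size uc (fun c _ => mem_enum T c).
  by rewrite size_map size_iota -cardE ltnn.
move=> /(uniqPn (code 0)) [a [b [ab]]]; rewrite size_map size_iota => b_lt.
rewrite !(nth_map 0) ?size_iota ?nth_iota ?(ltn_trans ab) // !add0n.
by move=> /code_eq; exists a, b.
Qed.

Lemma rel_power_eventually_periodic :
  exists a p, (0 < p)%N /\ forall q x, S (a + x) =2 S (a + x + q * p).
Proof.
have [a [b [ab eqS]]] := rel_power_repeat.
have shift x : S (a + x) =2 S (b + x).
  elim: x => [|x IH]; first by rewrite !addn0.
  by rewrite !addnS; apply: rel_power_succ.
exists a, (b - a)%N; split=> [|q x]; first by rewrite subn_gt0.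
elim: q => [|q IH] i k; first by rewrite addn0.
by rewrite IH -addnA shift; congr S; lia.
Qed.

Lemma rel_power_loop c j k x q : S c j j -> S x j k -> S (q * c + x) j k.
Proof.
move=> Sc Sx; elim: q => [|q IH]; first by rewrite mul0n.
by rewrite mulSn -addnA S_add; apply/hasP; exists j; rewrite ?Sc.
Qed.

Hypothesis S_return : forall m i j, (0 < m)%N -> S m i j -> exists2 t, (0 < t)%N & S t j i.

Lemma rel_power_factor : exists a, forall L m i j k, (a <= L)%N -> (0 < m)%N ->
  S m i j -> S (m + L) i k -> S L j k.
Proof.
have [a [p [p_gt0 periodic]]] := rel_power_eventually_periodic.
exists a => L m i j k aL m_gt0 Sij Sik.
have [t t_gt0 Sji] := S_return m_gt0 Sij.
have Sjj : S (t + m) j j by rewrite S_add; apply/hasP; exists i; rewrite ?Sji.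
have Sjk : S (t + (m + L)) j k by rewrite S_add; apply/hasP; exists i; rewrite ?Sji.
(* Going around the cycle j -> i -> j another p.-1 times puts the length in the periodic range. *)
have := rel_power_loop p.-1 Sjj Sjk.
have -> : (p.-1 * (t + m) + (t + (m + L)) = a + (L - a) + (t + m) * p)%N.
  by rewrite -[in RHS](prednK p_gt0) mulnS; lia.
by rewrite -periodic subnKC.
Qed.

End EventuallyPeriodicRelations.

Section FiniteState.
Variables (R : realType) (Omega : countType) (e : seq Omega).
Hypotheses (e_uniq : uniq e) (e_full : forall x, x \in e).

Let finsupp (f : Omega -> R) : forall x, x \notin e -> f x = 0.
Proof. by move=> x; rewrite e_full. Qed.

Lemma rsum_fin (f : Omega -> R) : rsum f = \sum_(x <- e) f x.
Proof. exact: rsum_finsupp e_uniq (finsupp f). Qed.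

Lemma sum_complexE (s : seq Omega) (f : Omega -> R[i]) :
  \sum_(x <- s) f x = (\sum_(x <- s) complex.Re (f x)) +i* (\sum_(x <- s) complex.Im (f x)).
Proof.
elim: s => [|a s IH]; first by rewrite !big_nil.
by rewrite !big_cons IH; case: (f a).
Qed.

Lemma csum_fin (f : Omega -> R[i]) : csum f = \sum_(x <- e) f x.
Proof. by rewrite /csum !rsum_fin sum_complexE. Qed.

Lemma sum_reindex (V : zmodType) (f g : Omega -> Omega) : cancel f g -> cancel g f ->
  forall F : Omega -> V, \sum_(y <- e) F y = \sum_(j <- e) F (f j).
Proof.
move=> fK gK F; rewrite -(big_map f xpredT); apply: perm_big; apply: uniq_perm => //.
  by rewrite (map_inj_uniq (can_inj fK)).
by move=> x; rewrite e_full -(gK x) map_f.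
Qed.

Lemma sum_uniq_le (s : seq Omega) (F : Omega -> R) : uniq s -> (forall x, 0 <= F x) ->
  \sum_(x <- s) F x <= \sum_(x <- e) F x.
Proof.
move=> us F_ge0; rewrite [leRHS](bigID (fun x => x \in s)) /= -[X in _ <= X + _]big_filter.
have se : perm_eq [seq x <- e | x \in s] s.
  by apply: uniq_perm; rewrite ?filter_uniq // => x; rewrite mem_filter e_full andbT.
by rewrite (perm_big _ se) lerDl sumr_ge0.
Qed.

Lemma colsq_fin (A : cmat R Omega) : exists M, colsq A M.
Proof.
exists (\sum_(j <- e) \sum_(i <- e) abs2 (A i j)) => j s us.
apply: le_trans (sum_uniq_le us (fun x => abs2_ge0 (A x j))) _.
rewrite [leRHS](bigD1_seq j) //= lerDl.
by apply: sumr_ge0 => k _; apply: sumr_ge0 => x _; apply: abs2_ge0.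
Qed.

Lemma mpowS (P : rmat R Omega) n i k : mpow P n.+1 i k = \sum_(j <- e) mpow P n i j * P j k.
Proof. exact: rsum_fin. Qed.

Lemma mpowD (P : rmat R Omega) n m i k :
  mpow P (n + m) i k = \sum_(j <- e) mpow P n i j * mpow P m j k.
Proof.
elim: m k => [|m IH] k.
  rewrite addn0 (bigD1_seq k) //= eqxx mulr1 big1 ?addr0 // => j /negbTE ->.
  by rewrite mulr0.
rewrite addnS mpowS; under eq_bigr do rewrite IH mulr_suml.
rewrite exchange_big; apply: eq_bigr => j _.
by rewrite mpowS mulr_sumr; apply: eq_bigr => l _; rewrite mulrA.
Qed.

Lemma mpow_ge0 (P : rmat R Omega) : (forall i j, 0 <= P i j) ->
  forall n i k, 0 <= mpow P n i k.
Proof.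
move=> P_ge0; elim=> [|n IH] i k /=; first by case: eqP.
by rewrite rsum_fin sumr_ge0 // => j _; rewrite mulr_ge0.
Qed.

Lemma mpow_rowsum (P : rmat R Omega) : stochastic P ->
  forall n i, \sum_(k <- e) mpow P n i k = 1.
Proof.
move=> [_ P_row]; elim=> [|n IH] i.
  rewrite (bigD1_seq i) //= eqxx big1 ?addr0 // => k.
  by rewrite eq_sym => /negbTE ->.
under eq_bigr do rewrite mpowS.
rewrite exchange_big -[RHS](IH i); apply: eq_bigr => j _.
by rewrite -mulr_sumr (cvg_series_enumf_finsupp e_uniq (finsupp _) (P_row j)) mulr1.
Qed.

Lemma mpow_le1 (P : rmat R Omega) : stochastic P -> forall n i k, mpow P n i k <= 1.
Proof.
move=> sP n i k; rewrite -(mpow_rowsum sP n i) (bigD1_seq k) //= lerDl.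
by apply: sumr_ge0 => j _; apply: mpow_ge0; case: sP.
Qed.

Lemma mpow_eq0 (P : rmat R Omega) n i k : (forall i j, 0 <= P i j) ->
  ~~ (0 < mpow P n i k) -> mpow P n i k = 0.
Proof. by move=> P_ge0; rewrite lt0r mpow_ge0 // andbT negbK => /eqP. Qed.

Definition supp (P : rmat R Omega) n i k := 0 < mpow P n i k.

Lemma suppD (P : rmat R Omega) : (forall i j, 0 <= P i j) ->
  forall n m i k, supp P (n + m) i k = has (fun j => supp P n i j && supp P m j k) e.
Proof.
move=> P_ge0 n m i k; have ge0 := mpow_ge0 P_ge0.
rewrite /supp mpowD lt0r psumr_neq0 ?sumr_ge0 => [|j _|j _]; rewrite ?mulr_ge0 //.
by rewrite andbT; apply: eq_has => j; rewrite mulr_ge0_gt0.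
Qed.

Lemma supp_conj (P Q : rmat R Omega) (sigma sigma' : Omega -> Omega) :
    (forall i j, 0 <= P i j) -> (forall i j, 0 <= Q i j) ->
    cancel sigma sigma' -> cancel sigma' sigma ->
    (forall i j, 0 < P i j <-> 0 < Q (sigma i) (sigma j)) ->
  forall n i k, supp P n i k = supp Q n (sigma i) (sigma k).
Proof.
move=> P_ge0 Q_ge0 sigmaK sigma'K PQ; elim=> [|n IH] i k.
  by rewrite /supp /= (inj_eq (can_inj sigmaK)).
have supp1 T j l : supp T 1 j l = (0 < T j l) by rewrite /supp mpow1.
rewrite -[n.+1]addn1 !suppD //; apply/hasP/hasP => -[j _ /andP [ij jk]].
  by exists (sigma j); rewrite ?e_full // -IH ij supp1 -PQ -supp1.
by exists (sigma' j); rewrite ?e_full // IH sigma'K ij supp1 PQ sigma'K -supp1.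
Qed.

Lemma essential_return (P : rmat R Omega) : (forall i j, 0 <= P i j) -> essential P ->
  forall m i j, (0 < m)%N -> supp P m i j -> exists2 t, (0 < t)%N & supp P t j i.
Proof.
move=> P_ge0 essP m i j m_gt0 Pij; apply: contrapT => no_return; apply: essP.
exists i, j, m; split=> //; split=> // t t_gt0; apply: mpow_eq0 => //.
by apply/negP => Pji; apply: no_return; exists t.
Qed.

Lemma seq_pos_lbound (T : eqType) (l : seq T) (g : T -> R) :
  exists2 d, 0 < d & forall x, x \in l -> 0 < g x -> d <= g x.
Proof.
elim: l => [|a l [d d_gt0 IH]]; first by exists 1.
have [ga_gt0|ga_le0] := ltrP 0 (g a).
  exists (Num.min d (g a)) => [|x]; first by rewrite lt_min d_gt0.
  by rewrite inE => /orP [/eqP ->|/IH xl gx]; rewrite ge_min ?lexx ?orbT ?xl.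
exists d => // x; rewrite inE => /orP [/eqP -> ga|]; last exact: IH.
by move: ga; rewrite ltNge ga_le0.
Qed.

Lemma mpow_pos_lbound (P : rmat R Omega) : stochastic P -> essential P ->
  exists2 d, 0 < d & forall n i k, (0 < n)%N -> 0 < mpow P n i k -> d <= mpow P n i k.
Proof.
move=> sP essP; have P_ge0 := sP.1; have ge0 := mpow_ge0 P_ge0.
have [a factor] := rel_power_factor e_full (suppD P_ge0) (essential_return P_ge0 essP).
have [d d_gt0 lb] := seq_pos_lbound
  [seq (n, ik) | n <- iota 0 a.+1, ik <- [seq (i, k) | i <- e, k <- e]]
  (fun t => mpow P t.1 t.2.1 t.2.2).
have lb_small n i k : (n <= a)%N -> 0 < mpow P n i k -> d <= mpow P n i k.
  move=> na; apply: (lb (n, (i, k))); apply: allpairs_f; last exact: allpairs_f.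
  by rewrite mem_iota add0n ltnS.
exists d => // n i k n_gt0 Pik; have [na|an] := leqP n a; first exact: lb_small.
(* In P^n = P^(n-a) P^a every P^a_jk that contributes is positive by [factor], hence at least d,
   and the row of P^(n-a) sums to 1. *)
have n_split : n = (n - a + a)%N by rewrite subnK // ltnW.
rewrite n_split mpowD -[d]mul1r -(mpow_rowsum sP (n - a) i) mulr_suml.
apply: ler_sum => j _.
have [Pij|/(mpow_eq0 P_ge0) ->] := boolP (0 < mpow P (n - a) i j); last by rewrite !mul0r.
rewrite ler_wpM2l ?ge0 //; apply: lb_small => //.
have Pik' : supp P (n - a + a) i k by rewrite /supp -n_split.
by have := factor a (n - a)%N i j k (leqnn a); rewrite subn_gt0; apply.
Qed.

Section Construction.
Variables (P Q : rmat R Omega) (sigma sigma' : Omega -> Omega).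
Hypotheses (sP : stochastic P) (sQ : stochastic Q).
Hypotheses (sigmaK : cancel sigma sigma') (sigma'K : cancel sigma' sigma).
Hypothesis PQ : forall i j, 0 < P i j <-> 0 < Q (sigma i) (sigma j).

Definition weight n i k : R :=
  Num.sqrt (mpow P n i k) / Num.sqrt (mpow Q n (sigma i) (sigma k)).

Definition similarity_map (n : nat) (A : cmat R Omega) : cmat R Omega :=
  fun x y => A (sigma' x) (sigma' y) * (weight n (sigma' x) (sigma' y))%:C.

Lemma similarity_mapE n A i k :
  similarity_map n A (sigma i) (sigma k) = A i k * (weight n i k)%:C.
Proof. by rewrite /similarity_map !sigmaK. Qed.

Lemma mpow_conj_gt0 n i k : (0 < mpow Q n (sigma i) (sigma k)) = (0 < mpow P n i k).
Proof. by have := supp_conj sP.1 sQ.1 sigmaK sigma'K PQ n i k. Qed.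

Lemma weight_eq0 n i k : ~~ (0 < mpow P n i k) -> weight n i k = 0.
Proof. by move=> /(mpow_eq0 sP.1) P0; rewrite /weight P0 sqrtr0 mul0r. Qed.

Lemma weight_neq0 n i k : 0 < mpow P n i k -> weight n i k != 0.
Proof.
by move=> Pik; apply: mulf_neq0; rewrite ?invr_eq0 gt_eqF // sqrtr_gt0 ?mpow_conj_gt0.
Qed.

Lemma sqrt_mpow_weight n i k :
  Num.sqrt (mpow Q n (sigma i) (sigma k)) * weight n i k = Num.sqrt (mpow P n i k).
Proof.
have [Pik|Pik] := boolP (0 < mpow P n i k); last first.
  by rewrite weight_eq0 // (mpow_eq0 sP.1 Pik) sqrtr0 mulr0.
by rewrite mulrC divfK // gt_eqF // sqrtr_gt0 mpow_conj_gt0.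
Qed.

Lemma weight_sqr n i k : weight n i k ^+ 2 = mpow P n i k / mpow Q n (sigma i) (sigma k).
Proof. by rewrite expr_div_n !sqr_sqrtr ?(mpow_ge0 sP.1) ?(mpow_ge0 sQ.1). Qed.

Lemma similarity_map_Umul_term n m A B i j k :
  (Num.sqrt (mpow Q n (sigma i) (sigma j)))%:C * similarity_map n A (sigma i) (sigma j) *
  ((Num.sqrt (mpow Q m (sigma j) (sigma k)))%:C * similarity_map m B (sigma j) (sigma k)) =
  (Num.sqrt (mpow P n i j))%:C * A i j * ((Num.sqrt (mpow P m j k))%:C * B j k).
Proof.
rewrite !similarity_mapE -(sqrt_mpow_weight n i j) -(sqrt_mpow_weight m j k) !rmorphM /=.
by ring.
Qed.

Lemma similarity_map_Umul n m A B : similarity_map (n + m) (Umul P n m A B) =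
  Umul Q n m (similarity_map n A) (similarity_map m B).
Proof.
apply/funext => x; apply/funext => z; rewrite -(sigma'K x) -(sigma'K z).
move: (sigma' x) (sigma' z) => i k; rewrite similarity_mapE /Umul mpow_conj_gt0 !csum_fin.
rewrite [in RHS](sum_reindex sigmaK sigma'K) /=.
under [in RHS]eq_bigr do rewrite similarity_map_Umul_term.
case: ifP => Pik; last by rewrite mul0r.
have sqrtP : (Num.sqrt (mpow P (n + m) i k))%:C != 0 :> R[i].
  by rewrite fmorph_eq0 gt_eqF // sqrtr_gt0.
have sqrtQ : (Num.sqrt (mpow Q (n + m) (sigma i) (sigma k)))%:C != 0 :> R[i].
  by rewrite fmorph_eq0 gt_eqF // sqrtr_gt0 mpow_conj_gt0.
by rewrite /weight fmorph_div /=; field; rewrite sqrtP sqrtQ.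
Qed.

Lemma similarity_map_Arv n A : Arv P n A -> Arv Q n (similarity_map n A).
Proof.
move=> [A0 _]; split; last exact: colsq_fin.
move=> x y; rewrite -(sigma'K x) -(sigma'K y) similarity_mapE => Q0.
by rewrite weight_eq0 ?rmorph0 ?mulr0 // -mpow_conj_gt0 Q0 ltxx.
Qed.

Lemma similarity_map_inj n A B :
  Arv P n A -> Arv P n B -> similarity_map n A = similarity_map n B -> A = B.
Proof.
move=> [A0 _] [B0 _] VAB; apply/funext => i; apply/funext => k.
have [Pik|/(mpow_eq0 sP.1) Pik] := boolP (0 < mpow P n i k); last by rewrite A0 ?B0.
have := congr1 (fun A => A (sigma i) (sigma k)) VAB; rewrite /= !similarity_mapE.
by move/mulIf; apply; rewrite fmorph_eq0 weight_neq0.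
Qed.

Lemma similarity_map_surj n B : Arv Q n B -> exists A, Arv P n A /\ similarity_map n A = B.
Proof.
(* Off the support of P^n the weight is 0, and so is its inverse. *)
move=> [B0 _]; exists (fun i k => B (sigma i) (sigma k) / (weight n i k)%:C); split.
  split=> [i k P0|]; last exact: colsq_fin.
  by rewrite weight_eq0 ?P0 ?ltxx // rmorph0 invr0 mulr0.
apply/funext => x; apply/funext => y; rewrite -(sigma'K x) -(sigma'K y).
move: (sigma' x) (sigma' y) => i k; rewrite similarity_mapE.
have [Pik|Pik] := boolP (0 < mpow P n i k).
  by rewrite divfK // fmorph_eq0 weight_neq0.
by rewrite B0 ?mul0r // (mpow_eq0 sQ.1) // mpow_conj_gt0.
Qed.

Lemma similarity_map_linear n A B (c : R[i]) :
  similarity_map n (fun i j => A i j + c * B i j) =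
  (fun i j => similarity_map n A i j + c * similarity_map n B i j).
Proof. by apply/funext => x; apply/funext => y; rewrite /similarity_map mulrDl mulrA. Qed.

Lemma similarity_map_bimodule n a b A :
  similarity_map n (fun i j => a i * A i j * b j) =
  (fun i j => (a \o sigma') i * similarity_map n A i j * (b \o sigma') j).
Proof.
apply/funext => x; apply/funext => y; rewrite /similarity_map /=.
by rewrite -!mulrA [b _ * _]mulrC.
Qed.

Lemma weight_sqr_le (d : R) n i k : 0 < d ->
    (forall i k, 0 < mpow Q n i k -> d <= mpow Q n i k) ->
  weight n i k ^+ 2 <= d^-1.
Proof.
move=> d_gt0 lbQ; have [Pik|/weight_eq0 ->] := boolP (0 < mpow P n i k); last first.
  by rewrite expr0n invr_ge0 ltW.
have Qik : 0 < mpow Q n (sigma i) (sigma k) by rewrite mpow_conj_gt0.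
rewrite weight_sqr ler_pdivrMr // (le_trans (mpow_le1 sP n i k)) //.
by rewrite -(mulVf (lt0r_neq0 d_gt0)) ler_wpM2l ?lbQ // invr_ge0 ltW.
Qed.

Lemma weight_sqr_ge (d : R) n i k : 0 < d ->
    (forall i k, 0 < mpow P n i k -> d <= mpow P n i k) ->
  0 < mpow P n i k -> d <= weight n i k ^+ 2.
Proof.
move=> d_gt0 lbP Pik; have Qik : 0 < mpow Q n (sigma i) (sigma k) by rewrite mpow_conj_gt0.
rewrite weight_sqr ler_pdivlMr //; apply: le_trans (lbP _ _ Pik).
by apply: ler_piMr; [apply: ltW | apply: mpow_le1].
Qed.

Lemma colsq_similarity_map (D : R) n A M : 0 <= D -> (forall i k, weight n i k ^+ 2 <= D) ->
  colsq A M -> colsq (similarity_map n A) (M * D).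
Proof.
move=> D_ge0 wD AM y s us.
rewrite (le_trans (y := \sum_(x <- s) abs2 (A (sigma' x) (sigma' y)) * D)) //.
  by apply: ler_sum => x _; rewrite /similarity_map abs2Mr ler_wpM2l ?abs2_ge0.
rewrite -mulr_suml ler_wpM2r // -(big_map sigma' xpredT (fun x => abs2 (A x (sigma' y)))).
by apply: AM; rewrite (map_inj_uniq (can_inj sigma'K)).
Qed.

Lemma colsq_similarity_map_inv (D : R) n A M : 0 <= D ->
    (forall i k, 0 < mpow P n i k -> 1 <= weight n i k ^+ 2 * D) ->
  Arv P n A -> colsq (similarity_map n A) M -> colsq A (M * D).
Proof.
move=> D_ge0 wD [A0 _] VM j s us.
rewrite (le_trans (y := \sum_(i <- s) abs2 (similarity_map n A (sigma i) (sigma j)) * D)) //.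
  apply: ler_sum => i _; rewrite similarity_mapE abs2Mr.
  have [Pij|/(mpow_eq0 sP.1) /A0 ->] := boolP (0 < mpow P n i j); last first.
    by rewrite abs2_0 !mul0r.
  by rewrite -mulrA ler_peMr ?abs2_ge0 ?wD.
rewrite -mulr_suml ler_wpM2r //.
rewrite -(big_map sigma xpredT (fun x => abs2 (similarity_map n A x (sigma j)))).
by apply: VM; rewrite (map_inj_uniq (can_inj sigmaK)).
Qed.

Lemma similarity_map_bounded : essential P -> essential Q ->
  exists C : R, 0 <= C /\
    forall n, (0 < n)%N -> forall A, Arv P n A -> forall c : R, 0 <= c ->
      (norm_le A c -> norm_le (similarity_map n A) (C * c)) /\
      (norm_le (similarity_map n A) c -> norm_le A (C * c)).
Proof.
move=> essP essQ.
have [dP dP_gt0 lbP] := mpow_pos_lbound sP essP.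
have [dQ dQ_gt0 lbQ] := mpow_pos_lbound sQ essQ.
pose d := Num.min dP dQ; have d_gt0 : 0 < d by rewrite lt_min dP_gt0.
have di_ge0 : 0 <= d^-1 by rewrite invr_ge0 ltW.
exists (Num.sqrt d^-1); split=> [|n n_gt0 A AP c c_ge0]; first exact: sqrtr_ge0.
rewrite /norm_le; have -> : (Num.sqrt d^-1 * c) ^+ 2 = c ^+ 2 * d^-1.
  by rewrite exprMn sqr_sqrtr // mulrC.
split; first apply: colsq_similarity_map => // i k.
  apply: weight_sqr_le => // x y /(lbQ _ _ _ n_gt0); apply: le_trans.
  by rewrite ge_min lexx orbT.
apply: colsq_similarity_map_inv => // i k Pik.
rewrite -(mulfV (lt0r_neq0 d_gt0)) ler_wpM2r //.
by apply: weight_sqr_ge => // x y /(lbP _ _ _ n_gt0); apply: le_trans; rewrite ge_min lexx.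
Qed.

Lemma similarity_map_similarity : essential P -> essential Q ->
  similarity P Q (fun f => f \o sigma') similarity_map.
Proof.
move=> essP essQ; split; first by move=> n _ A; apply: similarity_map_Arv.
split; first by move=> n _ A B; apply: similarity_map_inj.
split; first by move=> n _ B; apply: similarity_map_surj.
split; first by move=> n _ A B c _ _; apply: similarity_map_linear.
split; first by move=> n _ a b A _ _ _; apply: similarity_map_bimodule.
split; first exact: similarity_map_bounded.
by move=> n m _ _ A B _ _; apply: similarity_map_Umul.
Qed.

End Construction.

End FiniteState.

Theorem mainTheorem10 (R : realType) (Omega : countType) (P Q : rmat R Omega) :
  stochastic P -> stochastic Q ->
  (* (1) *)
  (forall (rho : (Omega -> R[i]) -> (Omega -> R[i])) (sigma : Omega -> Omega),
     star_aut rho ->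
     (forall j : Omega, rho (ptind R j) = ptind R (sigma j)) ->
     (exists V, similarity P Q rho V) ->
     forall i j, 0 < P i j <-> 0 < Q (sigma i) (sigma j)) /\
  (* (2) *)
  ((exists s : seq Omega, forall x, x \in s) ->
   essential P -> essential Q ->
   forall sigma sigma_inv : Omega -> Omega,
     cancel sigma sigma_inv -> cancel sigma_inv sigma ->
     (forall i j, 0 < P i j <-> 0 < Q (sigma i) (sigma j)) ->
     exists V, similarity P Q (fun f => f \o sigma_inv) V).
Proof.
move=> sP sQ; split=> [rho sigma _ rho_ptind [V simV]|[s s_full] essP essQ sigma sigma'].
  exact: similarity_matches_supports rho_ptind simV.
move=> sigmaK sigma'K PQ; have e_full x : x \in undup s by rewrite mem_undup.
by eexists; apply: (similarity_map_similarity (undup_uniq s) e_full sP sQ sigmaK sigma'K PQ).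
Qed.
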